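(* Let $n\geq 1$ and $r\geq 4$ be integers, and let $S_r=\{0,1,\ldots,2^r-1\}$. Then there is a labeling of every arc of the complete binary tree of depth $n$ by letters of $S_r$ with the following property. Let $u$ and $v$ be any two distinct nodes at a common depth $h$. Let their least common ancestor have depth $h-l$, so $l\geq1$. Let $a_1a_2\ldots a_h$ and $b_1b_2\ldots b_h$ be the letters on the arcs of the root-to-$u$ and root-to-$v$ paths, respectively. Then $$H(a_{h-l+1}a_{h-l+2}\ldots a_h,\;b_{h-l+1}b_{h-l+2}\ldots b_h)\geq\begin{cases} l & \text{if } l\leq r,\\ r & \text{if } r<l\leq 2r,\\ l/2 & \text{if } l>2r.\end{cases}$$ Here $H$ is the Hamming distance, i.e. the number of positions $i$ with $a_i\neq b_i$.
   Context: An ''$r$-bit binary tree code of depth $n$'' is a complete binary tree of depth $n$ in which every arc is labeled with a letter from the alphabet $S_r=\{0,1,\ldots,2^r-1\}$. The letters can be viewed as $r$-bit vectors. The distance requirement on the labeling is the one stated in the claim. *)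

From mathcomp Require Import all_boot.
Set Implicit Arguments. Unset Strict Implicit. Unset Printing Implicit Defensive.

(* Nodes of the complete binary tree of depth n are bit strings (seq bool) of
   length <= n; the root is [::].  Each arc is identified with its lower
   endpoint (a nonempty string w), so a labeling of the arcs by letters of
   S_r = {0,..,2^r-1} is a function  lab : seq bool -> 'I_(2^r)  (values on
   strings of length 0 or > n are irrelevant). *)

Definition path_labels r (lab : seq bool -> 'I_(2 ^ r)) (u : seq bool)
  : seq 'I_(2 ^ r) :=
  [seq lab (take i u) | i <- iota 1 (size u)].

(* Depth of the least common ancestor = length of the longest common prefix. *)
Fixpoint lcp (u v : seq bool) : nat :=
  match u, v with
  | x :: u', y :: v' => if x == y then (lcp u' v').+1 else 0
  | _, _ => 0
  end.

Definition hamming (T : eqType) (s t : seq T) : nat :=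
  count (fun p => p.1 != p.2) (zip s t).

Definition dist_ok (r l H : nat) : Prop :=
  if l <= r then l <= H
  else if l <= 2 * r then r <= H
  else l <= 2 * H.

(* The labeling is a linear convolutional code over F_2^r: the arc into the node w
   carries conv g w |w| = sum_(j < |w|) w_j g_(|w|-1-j) for taps g_0, g_1, ... in F_2^r.
   By linearity, below the common ancestor of u and v the letters differ exactly where
   the encoder outputs on the xor pattern e of u and v (which starts with 1) are
   nonzero.  Taking g_i to be the i-th unit vector for i < r makes the first r outputs
   nonzero, which settles l <= 2r.  The later taps are fixed one at a time by the method
   of conditional expectations.  If the open taps were uniform, each open output would
   be uniform, so for q = 2^r and rho = 2 - 1/q the weight q^Z rho^k / q^(l/2+1) of a
   pattern of length l > 2r, with Z zero outputs so far and k outputs still open, is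
   the expected value of q^(Z_final - l/2 - 1).  Hence the potential, the total weight,
   can be kept from increasing.  As r >= 4 it starts at most 1/2, while a final pattern
   with more than l/2 zeros would contribute at least 1. *)

From mathcomp Require Import all_boot all_order all_algebra.
From mathcomp Require Import zify ring lra.
Import GRing.Theory Num.Theory Order.TTheory.
Set Implicit Arguments. Unset Strict Implicit. Unset Printing Implicit Defensive.
Local Open Scope ring_scope.

Lemma lcp_spec (u v : seq bool) : size u = size v -> u != v ->
  [/\ (lcp u v < size u)%N,
      forall j, (j < lcp u v)%N -> nth false u j = nth false v j &
      nth false u (lcp u v) != nth false v (lcp u v)].
Proof.
elim: u v => [|x u IHu] [|y v] //= [eq_size] neq_uv.
case: eqP => [eq_xy|/eqP neq_xy]; last by split.
subst y; have neq_uv' : u != v by apply: contra neq_uv => /eqP ->.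
by case: (IHu v eq_size neq_uv') => *; split => // -[].
Qed.

Lemma hamming_map (T : Type) (U : eqType) (f h : T -> U) s :
  hamming (map f s) (map h s) = count (fun i => f i != h i) s.
Proof. by rewrite /hamming; elim: s => //= x s ->. Qed.

Lemma geometric_sum_le (R : numFieldType) (x : R) N : 0 <= x -> x < 1 ->
  \sum_(i < N) x ^+ i <= (1 - x)^-1.
Proof.
move=> x_ge0 x_lt1; have lt0 : 0 < 1 - x by rewrite subr_gt0.
have geo : (1 - x) * \sum_(i < N) x ^+ i = 1 - x ^+ N.
  by rewrite -opprB mulNr -subrX1 opprB.
rewrite -(ler_pM2l lt0) mulfV ?gt_eqF // geo lerBlDr lerDl.
exact: exprn_ge0.
Qed.

Lemma sum_shift_le (R : numDomainType) (F : nat -> R) N c d : (c <= d)%N ->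
  (forall i, 0 <= F i) ->
  \sum_(l < N | (d < l)%N) F (l - c)%N <= \sum_(i < N - c) F i.
Proof.
move=> le_cd F_ge0.
rewrite -(big_mkord (fun l => d < l)%N (fun l => F (l - c)%N)) -(big_mkord xpredT F).
apply: (@le_trans _ _ (\sum_(c <= l < N) F (l - c)%N)).
  rewrite (big_nat_widenl _ _ _ _ _ (leq0n c)) big_mkcond [X in X <= _]big_mkcond.
  apply: ler_sum_nat => l _ /=.
  by case: ifP => [lt_dl|_]; [rewrite ifT //; lia | case: ifP].
rewrite -{1}[c]add0n big_addn.
by under eq_bigr => i _ do rewrite addnK.
Qed.

Local Notation letter r := 'rV['F_2]_r.

Lemma card_letter r : #|{: letter r}| = (2 ^ r)%N.
Proof. by rewrite card_mx card_Fp // mul1n. Qed.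

Lemma letter_addr_eq0 r (x y : letter r) : (x + y == 0) = (x == y).
Proof.
rewrite addr_eq0; congr (_ == _); apply/rowP => j.
by rewrite !mxE oppr_pchar2 //; exact: pchar_Fp.
Qed.

Lemma letter_addrr r (x : letter r) : x + x = 0.
Proof. by apply/eqP; rewrite letter_addr_eq0. Qed.

Section Encoder.
Variable r : nat.
Implicit Types (g : nat -> letter r) (e u v : seq bool).

Definition conv g e t : letter r :=
  \sum_(j < t) (if nth false e j then g (t - j.+1)%N else 0).

Lemma eq_conv g g' e t :
  (forall i, (i < t)%N -> g i = g' i) -> conv g e t = conv g' e t.
Proof.
move=> eq_gg'; apply: eq_bigr => j _; case: ifP => // _.
by apply: eq_gg'; have := ltn_ord j; lia.
Qed.

Lemma convS g e t :
  conv g e t.+1 = (if nth false e 0 then g t else 0) + conv g (behead e) t.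
Proof.
rewrite /conv big_ord_recl subn1; congr (_ + _).
by apply: eq_bigr => j _; rewrite nth_behead.
Qed.

Lemma conv_take g e t : conv g (take t e) t = conv g e t.
Proof. by apply: eq_bigr => j _; rewrite nth_take. Qed.

Definition bitxor u v := mkseq (fun j => nth false u j != nth false v j) (size u).

Lemma conv_add g u v t : (t <= size u)%N ->
  conv g u t + conv g v t = conv g (bitxor u v) t.
Proof.
move=> le_tu; rewrite /conv -big_split /=; apply: eq_bigr => j _.
rewrite nth_mkseq; last by have := ltn_ord j; lia.
by case: (nth _ u j); case: (nth _ v j); rewrite ?addr0 ?add0r ?letter_addrr.
Qed.

Lemma conv_drop g e k t : (forall j, (j < k)%N -> ~~ nth false e j) ->
  (k <= t)%N -> conv g e t = conv g (drop k e) (t - k).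
Proof.
move=> e_false le_kt.
rewrite /conv.
rewrite -(big_mkord xpredT (fun j => if nth false e j then g (t - j.+1)%N else 0)).
rewrite (big_cat_nat _ (n := k)) //= big_nat_cond big1 ?add0r; last first.
  by move=> j /andP[/andP[_ lt_jk] _]; rewrite (negbTE (e_false j lt_jk)).
rewrite -{1}[k]add0n big_addn big_mkord; apply: eq_bigr => j _.
by rewrite nth_drop addnC -addnS subnDA.
Qed.

Definition unit_taps g := forall i : 'I_r, g i = delta_mx 0 i.

Lemma conv_unit_taps_neq0 g e t : unit_taps g -> nth false e 0 ->
  (0 < t <= r)%N -> conv g e t != 0.
Proof.
move=> taps e0; case: t => // t /= lt_tr.
apply/eqP => /rowP /(_ (Ordinal lt_tr)).
rewrite convS e0 (taps (Ordinal lt_tr)) !mxE summxE !eqxx big1 => [|j _].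
  by rewrite addr0 => /eqP; rewrite oner_eq0.
case: ifP => _; last by rewrite mxE.
have lt_r : (t - j.+1 < r)%N by have := ltn_ord j; lia.
rewrite (taps (Ordinal lt_r)) mxE /= -val_eqE /=.
by case: eqP => //; have := ltn_ord j; lia.
Qed.

End Encoder.

Section Potential.
Variables r n : nat.
Implicit Types (g : nat -> letter r) (e : seq bool).

Local Notation q := ((2 ^ r)%:R : rat).

Definition rho : rat := 2 - q^-1.

Definition weight (z k l : nat) : rat := q ^+ z * rho ^+ k / q ^+ l./2.+1.

Definition late_zeros g e s l : nat :=
  count (fun t => conv g e t == 0) (iota r.+1 (minn s l - r)).

Definition potential g s : rat :=
  \sum_(l < n.+1 | (2 * r < l)%N) \sum_(tl : l.-1.-tuple bool)
    weight (late_zeros g (true :: tl) s l) (l - s) l.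

Definition set_tap g s (x : letter r) i := if i == s then x else g i.

Lemma q_gt0 : 0 < q.
Proof. by rewrite ltr0n expn_gt0. Qed.

Lemma rho_gt0 : 0 < rho.
Proof.
rewrite /rho subr_gt0 (@le_lt_trans _ _ 1) // invf_le1 ?q_gt0 //.
by rewrite ler1n expn_gt0.
Qed.

Lemma sum_pow_eq0 (c : letter r) : \sum_(x : letter r) q ^+ (x + c == 0) = q * rho.
Proof.
rewrite (reindex_inj (addIr c)) /=.
under eq_bigr => x _ do rewrite -addrA letter_addrr addr0.
rewrite (bigD1 0) //= eqxx expr1.
rewrite (eq_bigr (fun _ => 1)) => [|x /negbTE -> //].
rewrite sumr_const cardC1 card_letter /rho mulrBr mulfV ?gt_eqF ?q_gt0 //.
rewrite -natr1 -subn1 natrB ?expn_gt0 //; lra.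
Qed.

Lemma weight_ge0 z k l : 0 <= weight z k l.
Proof.
by rewrite /weight !(mulr_ge0, invr_ge0, exprn_ge0) // ltW ?q_gt0 ?rho_gt0.
Qed.

Lemma weightD z b k l : weight (z + b) k l = weight z k l * q ^+ b.
Proof. by rewrite /weight exprD; ring. Qed.

Lemma weightS z k l : weight z k l * (q * rho) = q * weight z k.+1 l.
Proof. by rewrite /weight [rho ^+ k.+1]exprS; ring. Qed.

Lemma eq_late_zeros g g' e s l : (forall i, (i < s)%N -> g i = g' i) ->
  late_zeros g e s l = late_zeros g' e s l.
Proof.
move=> eq_gg'; apply: eq_in_count => t; rewrite mem_iota => /andP[gt_t lt_t].
by rewrite (@eq_conv _ g g') // => i lt_i; apply: eq_gg'; lia.
Qed.

Lemma late_zerosS g e s l : (r <= s)%N -> (s < l)%N ->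
  late_zeros g e s.+1 l = (late_zeros g e s l + (conv g e s.+1 == 0%R))%N.
Proof.
move=> le_rs lt_sl; rewrite /late_zeros.
have -> : (minn s.+1 l - r = (minn s l - r) + 1)%N by lia.
rewrite iotaD count_cat /= addn0.
by have -> : (r.+1 + (minn s l - r) = s.+1)%N by lia.
Qed.

Lemma late_zeros_stable g e s l : (l <= s)%N ->
  late_zeros g e s.+1 l = late_zeros g e s l.
Proof. by move=> le_ls; rewrite /late_zeros; congr (count _ (iota _ _)); lia. Qed.

Lemma sum_weight_set_tap g e s l : nth false e 0 -> (r <= s)%N ->
  \sum_(x : letter r) weight (late_zeros (set_tap g s x) e s.+1 l) (l - s.+1) l
  = q * weight (late_zeros g e s l) (l - s) l.
Proof.
move=> e0 le_rs.
have zeros_below x : late_zeros (set_tap g s x) e s l = late_zeros g e s l.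
  by apply: eq_late_zeros => i lt_is; rewrite /set_tap ifN //; lia.
have [le_ls|lt_sl] := leqP l s.
  under eq_bigr => x _ do rewrite late_zeros_stable // zeros_below.
  by rewrite sumr_const card_letter mulr_natl; congr (weight _ _ _ *+ _); lia.
have conv_set_tap x : conv (set_tap g s x) e s.+1 = x + conv g (behead e) s.
  rewrite convS e0 /set_tap eqxx; congr (_ + _).
  by apply: eq_conv => i lt_is; rewrite ifN //; lia.
under eq_bigr => x _ do rewrite late_zerosS // zeros_below conv_set_tap weightD.
rewrite -mulr_sumr sum_pow_eq0 weightS; congr (_ * weight _ _ _); lia.
Qed.

Lemma sum_potential_set_tap g s : (r <= s)%N ->
  \sum_(x : letter r) potential (set_tap g s x) s.+1 = q * potential g s.
Proof.
move=> le_rs; rewrite /potential exchange_big mulr_sumr; apply: eq_bigr => l _.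
rewrite exchange_big mulr_sumr; apply: eq_bigr => tl _.
exact: sum_weight_set_tap.
Qed.

Lemma exists_set_tap_potential_le g s : (r <= s)%N ->
  exists x, potential (set_tap g s x) s.+1 <= potential g s.
Proof.
move=> le_rs; apply/existsP; apply: contraT => /existsPn gt_pot.
have : q * potential g s < \sum_(x : letter r) potential (set_tap g s x) s.+1.
  rewrite -[in X in X * _]card_letter mulr_natl -sumr_const.
  apply: ltr_sum => [|x _]; last by rewrite ltNge gt_pot.
  by apply/hasP; exists 0; rewrite ?mem_index_enum.
by rewrite sum_potential_set_tap // ltxx.
Qed.

Lemma potential_descent g k : unit_taps g ->
  exists2 g', unit_taps g' & potential g' (r + k) <= potential g r.
Proof.
move=> taps; elim: k => [|k [g' taps' le_pot]]; first by exists g; rewrite ?addn0.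
have [x le_x] := exists_set_tap_potential_le g' (leq_addr k r).
exists (set_tap g' (r + k) x); last by rewrite addnS (le_trans le_x).
by move=> i; rewrite /set_tap ifN ?taps' //; have := ltn_ord i; lia.
Qed.

Lemma weight_start_le l : (4 <= r)%N -> (2 * r < l)%N ->
  weight 0 (l - r) l *+ 2 ^ l.-1 <= (rho / 2) ^+ (l - r) / (4 * q).
Proof.
move=> r4 lt_2rl; set k := (l - r)%N; set m := l./2.+1.
have le_exp : (2 + r + l.-1 + k <= r * m)%N.
  by have := odd_double_half l; rewrite /k /m; case: odd => /=; nia.
have le_pow : 2 ^+ k * (2 ^ l.-1)%:R * (4 * q) <= q ^+ m.
  rewrite -!natrX -!natrM ler_nat -expnM (_ : 4 = 2 ^ 2)%N // -!expnD.
  by rewrite leq_exp2l //; lia.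
set a := (rho / 2) ^+ k.
have a_ge0 : 0 <= a by rewrite exprn_ge0 // divr_ge0 // ltW ?rho_gt0.
have rhoE : rho ^+ k = 2 ^+ k * a by rewrite -exprMn mulrC divfK.
rewrite /weight expr0 mul1r rhoE.
have -> : 2 ^+ k * a / q ^+ m *+ 2 ^ l.-1
          = a * (2 ^+ k * (2 ^ l.-1)%:R / q ^+ m) by ring.
rewrite ler_wpM2l // ler_pdivrMr ?exprn_gt0 ?q_gt0 //.
by rewrite ler_pdivlMl ?mulr_gt0 ?q_gt0 // mulrC.
Qed.

Lemma potential_lt1 g : (4 <= r)%N -> potential g r < 1.
Proof.
move=> r4.
have no_zeros e l : late_zeros g e r l = 0%N.
  by rewrite /late_zeros; have -> : (minn r l - r = 0)%N by lia.
rewrite /potential.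
under eq_bigr => l _ do
  (under eq_bigr => tl _ do rewrite no_zeros; rewrite sumr_const card_tuple card_bool).
apply: (le_lt_trans (ler_sum _ (fun l lt_2rl => weight_start_le r4 lt_2rl))).
rewrite -mulr_suml; set x := rho / 2.
have x_ge0 : 0 <= x by rewrite divr_ge0 // ltW ?rho_gt0.
have x_lt1 : x < 1 by rewrite ltr_pdivrMr // /rho ltrBlDr ltrDl invr_gt0 q_gt0.
have sum_le : \sum_(l < n.+1 | (2 * r < l)%N) x ^+ (l - r) <= 2 * q.
  have x_pow_ge0 i : 0 <= x ^+ i by exact: exprn_ge0.
  apply: le_trans (sum_shift_le _ (leq_pmull r (ltn0Sn 1)) x_pow_ge0) _.
  apply: le_trans (geometric_sum_le _ x_ge0 x_lt1) _.
  have -> : 1 - x = (2 * q)^-1.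
    by rewrite /x /rho; field; rewrite gt_eqF ?q_gt0.
  by rewrite invrK.
have q_gt0 := q_gt0.
rewrite ltr_pdivrMr ?mulr_gt0 // mul1r (le_lt_trans sum_le) //; lra.
Qed.

Lemma weight_le_potential g s l (tl : l.-1.-tuple bool) :
  (2 * r < l)%N -> (l <= n)%N ->
  weight (late_zeros g (true :: tl) s l) (l - s) l <= potential g s.
Proof.
move=> lt_2rl le_ln; have lt_ln1 : (l < n.+1)%N by [].
rewrite /potential (bigD1 (Ordinal lt_ln1)) //= (bigD1 tl) //= -addrA lerDl.
by rewrite addr_ge0 ?sumr_ge0 // => *; rewrite ?sumr_ge0 // => *; apply: weight_ge0.
Qed.

Lemma weight_ge1 z l : (l./2 < z)%N -> 1 <= weight z 0 l.
Proof.
move=> lt_z; rewrite /weight expr0 mulr1 ler_pdivlMr ?exprn_gt0 ?q_gt0 // mul1r.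
by apply: ler_weXn2l; rewrite ?ler1n ?expn_gt0.
Qed.

Definition few_late_zeros g := forall e,
  (size e <= n)%N -> nth false e 0 -> (2 * r < size e)%N ->
  (count (fun t => conv g e t == 0%R) (iota r.+1 (size e - r)) <= (size e)./2)%N.

Lemma exists_few_late_zeros : (4 <= r)%N ->
  exists2 g, unit_taps g & few_late_zeros g.
Proof.
move=> r4; pose g0 i : letter r := \row_(j < r) (j == i :> nat)%:R.
have taps0 : unit_taps g0 by move=> i; apply/rowP => j; rewrite !mxE.
have [g taps le_pot] := potential_descent n taps0.
exists g => // -[//|b tl] /= le_ln -> lt_2rl; rewrite leqNgt; apply/negP => many.
have := potential_lt1 g0 r4; apply/negP; rewrite -leNgt (le_trans _ le_pot) //.
have := @weight_le_potential g (r + n) (size tl).+1 (in_tuple tl) lt_2rl le_ln.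
apply: le_trans.
have -> : ((size tl).+1 - (r + n) = 0)%N by lia.
rewrite weight_ge1 // /late_zeros.
by have -> : (minn (r + n) (size tl).+1 = (size tl).+1)%N by lia.
Qed.

End Potential.

Lemma dist_ok_conv r n (g : nat -> letter r) e :
  unit_taps g -> few_late_zeros n g -> (size e <= n)%N -> nth false e 0 ->
  dist_ok r (size e) (count (fun t => conv g e t != 0) (iota 1 (size e))).
Proof.
move=> taps few le_en e0; set l := size e.
have count_early m : (m <= r)%N -> count (fun t => conv g e t != 0) (iota 1 m) = m.
  move=> le_mr; rewrite (@eq_in_count _ _ predT) ?count_predT ?size_iota // => t.
  by rewrite mem_iota => /andP[? ?]; apply: conv_unit_taps_neq0 => //; lia.
rewrite /dist_ok; case: ifPn => [le_lr|]; first by rewrite count_early.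
rewrite -ltnNge => lt_rl.
have -> : iota 1 l = iota 1 r ++ iota r.+1 (l - r).
  by rewrite -iotaD subnKC // ltnW.
rewrite count_cat count_early //.
case: ifPn => [_|]; first exact: leq_addr.
rewrite -ltnNge => lt_2rl; have := few e le_en e0 lt_2rl; rewrite -/l.
have : (count (fun t => conv g e t == 0%R) (iota r.+1 (l - r))
        + count (fun t => conv g e t != 0%R) (iota r.+1 (l - r)) = l - r)%N.
  by rewrite -[RHS](size_iota r.+1) -(count_predC (fun t => conv g e t == 0)).
have := odd_double_half l; lia.
Qed.

Definition letter_code r (x : letter r) : 'I_(2 ^ r) :=
  cast_ord (card_letter r) (enum_rank x).

Lemma letter_code_inj r : injective (@letter_code r).
Proof. by move=> x y /cast_ord_inj /enum_rank_inj. Qed.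

Definition conv_labeling r (g : nat -> letter r) (w : seq bool) : 'I_(2 ^ r) :=
  letter_code (conv g w (size w)).

Lemma hamming_conv_labeling r (g : nat -> letter r) u v k :
  size u = size v -> (k <= size u)%N ->
  (forall j, (j < k)%N -> nth false u j = nth false v j) ->
  hamming (drop k (path_labels (conv_labeling g) u))
          (drop k (path_labels (conv_labeling g) v))
  = count (fun t => conv g (drop k (bitxor u v)) t != 0) (iota 1 (size u - k)).
Proof.
(* Naming the pattern keeps [map_drop] away from the [mkseq] inside [bitxor]. *)
move=> eq_size le_ku eq_prefix; set e := drop k (bitxor u v).
rewrite /path_labels -eq_size -!map_drop drop_iota hamming_map.
rewrite addnC iotaDl count_map; apply: eq_in_count => t.
rewrite mem_iota => /andP[lt0t lt_t] /=.
rewrite /conv_labeling (inj_eq (@letter_code_inj r)) !size_takel -?eq_size; try lia.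
rewrite !conv_take -letter_addr_eq0 conv_add; last lia.
rewrite (@conv_drop _ g _ k) ?addKn ?leq_addr // => j lt_jk.
by rewrite nth_mkseq ?eq_prefix ?eqxx //; lia.
Qed.

Local Close Scope ring_scope.

Theorem theorem1 (n r : nat) (hn : 1 <= n) (hr : 4 <= r) :
  exists lab : seq bool -> 'I_(2 ^ r),
    forall u v : seq bool,
      size u = size v -> size u <= n -> u != v ->
      dist_ok r (size u - lcp u v)
        (hamming (drop (lcp u v) (path_labels lab u))
                 (drop (lcp u v) (path_labels lab v))).
Proof.
have [g taps few] := exists_few_late_zeros n hr.
exists (conv_labeling g) => u v eq_size le_un neq_uv.
have [lt_ku eq_prefix neq_k] := lcp_spec eq_size neq_uv.
rewrite hamming_conv_labeling ?(ltnW lt_ku) //.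
have size_e : size (drop (lcp u v) (bitxor u v)) = (size u - lcp u v)%N.
  by rewrite size_drop size_mkseq.
rewrite -size_e; apply: dist_ok_conv taps few _ _; first by rewrite size_e; lia.
by rewrite nth_drop addn0 nth_mkseq.
Qed.
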